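(* For any categorial sequential allocation mechanism $f_\mathcal O$ and any assignment of each agent as optimistic or pessimistic, there exists a profile $P$ such that for all agents $j$: (1) if $j$ is optimistic, then the rank of the bundle allocated to $j$ is exactly $n^p+1-\prod_{l=K_j}^{p}k_{j,\mathcal O_j(l)}$; (2) if $j$ is pessimistic, then the rank of the bundle allocated to $j$ is exactly $n^p-\sum_{l=1}^{p}(k_{j,\mathcal O_j(l)}-1)$; and moreover (3) there exists an allocation in which at least $n-1$ agents get their top-ranked bundles and the remaining agent gets her top-ranked or second-ranked bundle.
   Context: Basic categorized domain: $n$ agents, $p$ categories $D_i=\{1,\ldots,n\}$ of indivisible items, bundles $\mathfrak D=D_1\times\cdots\times D_p$; each agent $j$ has a linear order $R_j$ over $\mathfrak D$ (a profile is $(R_1,\ldots,R_n)$). An allocation gives each agent one bundle so that each item of each category goes to exactly one agent. The rank of a bundle in $R$ is its position, the top having rank $1$ and the bottom rank $n^p$. CSAM $f_\mathcal O$: given a linear order $\mathcal O$ over $\{1,\ldots,n\}\times\{1,\ldots,p\}$, in rounds $t=1,\ldots,np$, if the $t$-th element of $\mathcal O$ is $(j,i)$ then agent $j$ chooses an item $d_{j,i}$ from $D_{i,t}$, the items of $D_i$ not yet chosen at the start of round $t$. Agent $j$ receives $(d_{j,1},\ldots,d_{j,p})$. Each agent is fixed in advance to be optimistic or pessimistic. When agent $j$ chooses from $D_i$ in round $t$, a bundle is available to her if for each category $l$ from which she has already chosen its $l$-th component equals $d_{j,l}$, and for each other category $l$ its $l$-th component lies in $D_{l,t}$. An optimistic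 agent chooses the $i$-th component of her top-ranked available bundle. A pessimistic agent chooses the $d\in D_{i,t}$ for which her lowest-ranked available bundle with $i$-th component $d$ is highest in $R_j$. Notation: $\mathcal O_j(l)$ is the $l$-th category agent $j$ chooses from in $\mathcal O$. $k_{j,i}$ is $n$ minus the number of agents who choose from $D_i$ before $j$ in $\mathcal O$. $K_j$ is the smallest $K\in\{1,\ldots,p\}$ such that for every $l$ with $K<l\leq p$, no agent chooses from category $\mathcal O_j(l)$ in any round strictly between the rounds of $(j,\mathcal O_j(K))$ and $(j,\mathcal O_j(l))$. *)

From mathcomp Require Import all_boot.
Set Implicit Arguments. Unset Strict Implicit. Unset Printing Implicit Defensive.

Section CSAM.
Variables n p : nat.

(* agents and items of each category are 'I_n (items 1..n shifted to 0..n-1),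
   categories are 'I_p; a bundle picks one item of each category *)
Definition bundle := {ffun 'I_p -> 'I_n}.

(* a linear order over a finite type, listed from top to bottom *)
Definition is_linorder (T : finType) (s : seq T) : Prop := perm_eq s (enum T).

Definition rank (R : seq bundle) (b : bundle) : nat := (index b R).+1.

(* state of the mechanism: s (j,i) = Some d iff agent j already chose d from D_i *)
Definition state := {ffun 'I_n * 'I_p -> option 'I_n}.

Definition state0 : state := [ffun _ => None].

Definition remaining (s : state) (l : 'I_p) : pred 'I_n :=
  [pred d | ~~ [exists j : 'I_n, s (j, l) == Some d]].

Definition available (s : state) (j : 'I_n) : pred bundle :=
  [pred b : bundle | [forall l : 'I_p,
     match s (j, l) with
     | Some d => b l == d
     | None => b l \in remaining s l
     end]].

Definition opt_choice (R : seq bundle) (s : state) (j : 'I_n) (i : 'I_p)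
  : option 'I_n :=
  omap (fun b : bundle => b i)
    [pick b | (b \in available s j) &&
              [forall b' : bundle, (b' \in available s j) ==> (rank R b <= rank R b')]].

Definition worst_rank (R : seq bundle) (s : state) (j : 'I_n) (i : 'I_p) (d : 'I_n)
  : nat := \max_(b : bundle | (b \in available s j) && (b i == d)) rank R b.

Definition pes_choice (R : seq bundle) (s : state) (j : 'I_n) (i : 'I_p)
  : option 'I_n :=
  [pick d | (d \in remaining s i) &&
     [forall d' : 'I_n, (d' \in remaining s i) ==>
        (worst_rank R s j i d <= worst_rank R s j i d')]].

Definition step (opt : 'I_n -> bool) (P : 'I_n -> seq bundle)
  (s : state) (x : 'I_n * 'I_p) : state :=
  let c := if opt x.1 then opt_choice (P x.1) s x.1 x.2
           else pes_choice (P x.1) s x.1 x.2 in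
  [ffun y => if y == x then c else s y].

Definition csam (O : seq ('I_n * 'I_p)) (opt : 'I_n -> bool)
  (P : 'I_n -> seq bundle) : state := foldl (step opt P) state0 O.

Definition round (O : seq ('I_n * 'I_p)) (x : 'I_n * 'I_p) : nat := index x O.

(* categories in the order agent j chooses them; O_j(l+1) = Ocat O j l *)
Definition Ocat (O : seq ('I_n * 'I_p)) (j : 'I_n) (l : 'I_p) : 'I_p :=
  nth l [seq x.2 | x <- O & x.1 == j] l.

Definition kk (O : seq ('I_n * 'I_p)) (j : 'I_n) (i : 'I_p) : nat :=
  n - #|[set j' : 'I_n | round O (j', i) < round O (j, i)]|.

(* K satisfies the condition (0-based: K stands for K+1) *)
Definition goodK (O : seq ('I_n * 'I_p)) (j : 'I_n) (K : nat) : bool :=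
  [forall l : 'I_p, forall j' : 'I_n, forall K' : 'I_p,
     ((nat_of_ord K' == K) && (K < l)) ==>
     ~~ ((round O (j, Ocat O j K') < round O (j', Ocat O j l)) &&
         (round O (j', Ocat O j l) < round O (j, Ocat O j l)))].

(* K_j - 1 : smallest good K in 0..p-1 *)
Definition Kj (O : seq ('I_n * 'I_p)) (j : 'I_n) : nat := find (goodK O j) (iota 0 p).

Definition is_allocation (A : 'I_n -> bundle) : Prop :=
  forall (i : 'I_p) (d : 'I_n), exists! j : 'I_n, A j i = d.

End CSAM.

From mathcomp Require Import all_boot zify.
Set Implicit Arguments. Unset Strict Implicit. Unset Printing Implicit Defensive.

(* Every agent is steered to her greedy bundle: in each category, the agent
   making the k-th choice from it receives item k (counting from 0), so the
   items still available in a category always form a final segment.  Each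
   preference order ranks bundles by a numeric class, ties being broken so that
   one designated bundle leads its class.

   An optimistic agent ranks last the bundles still available after her K_j-th
   choice, her greedy bundle first among them; the product formula counts them.
   Above them, available bundles are ranked by how late they first deviate from
   the greedy bundle: before her K_j-th choice some category is contested, so a
   bundle deviating at the current choice is beaten by one deviating only in a
   contested category, later.

   A pessimistic agent ranks her greedy bundle just above the bundles raising
   exactly one of its items, again ordered by the round of deviation; the sum
   formula counts them.  Choosing an item other than the greedy one leaves
   available the bundle raising only that item, which ranks below every
   available bundle through the greedy item.

   For (3), each agent receives the greedy bundle of the agent who starts
   choosing just before her, cyclically.  It is gone when she starts, so it can
   head her order without affecting her choices; only the agent who starts
   first may have to rank it second. *)

Lemma count_index_lt (T : eqType) (s : seq T) i :
  uniq s -> i <= size s -> count (fun y => index y s < i) s = i.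
Proof.
elim: s i => [|x s IH] [|i] //= /andP[x_notin uniq_s] le_i.
  by apply/eqP; rewrite add0n eqn0Ngt -has_count; apply/hasPn.
rewrite eqxx add1n -[in RHS](IH i uniq_s le_i); congr _.+1.
by apply: eq_in_count => y y_in /=; case: eqP => // eq_xy; rewrite eq_xy y_in in x_notin.
Qed.

Lemma find_le_index (T : eqType) (a : pred T) s x : x \in s -> a x -> find a s <= index x s.
Proof.
move=> x_in ax; rewrite leqNgt; apply/negP => /(before_find x).
by rewrite nth_index // ax.
Qed.

Lemma find_ge (T : Type) (a : pred T) s t x0 : t <= size s ->
  (forall i, i < t -> ~~ a (nth x0 s i)) -> t <= find a s.
Proof.
move=> le_t not_a; rewrite leqNgt; apply/negP => lt_find.
have has_a : has a s by rewrite has_find (leq_trans lt_find le_t).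
by have := nth_find x0 has_a; rewrite (negbTE (not_a _ lt_find)).
Qed.

Lemma card_ord_ge n m : #|[set d : 'I_n | m <= d]| = n - m.
Proof.
rewrite -sum1_card -[n - m]muln1 -sum_nat_const_nat big_geq_mkord.
by apply: eq_bigl => d; rewrite inE.
Qed.

Lemma card_ord_lt n m : m <= n -> #|[set d : 'I_n | d < m]| = m.
Proof.
move=> mn; have := cardsC [set d : 'I_n | m <= d].
rewrite card_ord card_ord_ge (_ : ~: _ = [set d : 'I_n | d < m]); first by lia.
by apply/setP => d; rewrite !inE -ltnNge.
Qed.

Lemma ord_pred_val n (i : 'I_n) : val (ord_pred i) = if val i == 0 then n.-1 else (val i).-1.
Proof.
have n_gt0 : 0 < n := leq_ltn_trans (leq0n i) (ltn_ord i).
rewrite /=; case: eqP => [->|/eqP i_ne0]; first by rewrite add0n modn_small // prednK.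
by rewrite -subn1 addnC -addnBA ?lt0n // modnDl modn_small ?subn1 //; move: (ltn_ord i); lia.
Qed.

(** * Orders given by ranking keys *)

Section KeyOrder.
Variables (T : finType) (key : T -> nat).

Definition key_order : seq T := sort (fun x y => key x <= key y) (enum T).

Lemma key_order_linorder : is_linorder key_order.
Proof. by rewrite /is_linorder perm_sort perm_refl. Qed.

Hypothesis key_inj : injective key.

Lemma index_key_order b : index b key_order = #|[pred y | key y < key b]|.
Proof.
set s := key_order; have ps : perm_eq s (enum T) := key_order_linorder.
have us : uniq s by rewrite (perm_uniq ps) enum_uniq.
have ms y : y \in s by rewrite (perm_mem ps) mem_enum.
have le_index : {in s &, forall x y, index x s <= index y s -> key x <= key y}.
  apply: sorted_leq_index => [x y z|x|]; [exact: leq_trans | exact: leqnn |].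
  by apply: sort_sorted => x y; apply: leq_total.
rewrite -{1}(count_index_lt us (index_size b s)) (permP ps) cardE /enum_mem size_filter.
rewrite count_filter -enumT; apply: eq_count => y /=; rewrite andbT inE !ltnNge; congr negb.
apply/idP/idP => [|le_key]; first exact: le_index.
rewrite leqNgt; apply/negP => lt_index.
have le_yb := le_index y b (ms y) (ms b) (ltnW lt_index).
have /key_inj eq_yb : key y = key b by apply/eqP; rewrite eqn_leq le_yb.
by rewrite eq_yb ltnn in lt_index.
Qed.

Lemma index_key_order_lt b b' : key b < key b' -> index b key_order < index b' key_order.
Proof.
move=> lt_key; rewrite !index_key_order; apply/proper_card/properP; split.
  by apply/subsetP => y; rewrite !inE => /ltn_trans; apply.
by exists b; rewrite !inE ?ltnn.
Qed.

Lemma index_key_order_le1 top b :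
  (forall b', key b' < key b -> b' = top) -> index b key_order <= 1.
Proof.
move=> below_top; rewrite index_key_order -(card1 top).
by apply/subset_leq_card/subsetP => b'; rewrite !inE => /below_top ->.
Qed.
End KeyOrder.

Section ClassKey.
Variables (T : finType) (cls : T -> nat) (top : T).

Definition tiebreak (b : T) : nat := if b == top then 0 else (enum_rank b).+1.

Definition class_key (b : T) : nat := cls b * #|T|.+1 + tiebreak b.

Lemma tiebreak_lt b : tiebreak b < #|T|.+1.
Proof. by rewrite /tiebreak; case: ifP => // _; rewrite ltnS ltn_ord. Qed.

Lemma class_key_inj : injective class_key.
Proof.
have tiebreak_inj : injective tiebreak.
  move=> b b'; rewrite /tiebreak; case: eqP => [->|_]; case: eqP => [->|_] //.
  by move=> [] /ord_inj /enum_rank_inj.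
have key_mod b : class_key b %% #|T|.+1 = tiebreak b.
  by rewrite /class_key modnMDl modn_small // tiebreak_lt.
by move=> b b' /(congr1 (modn^~ #|T|.+1)); rewrite !key_mod => /tiebreak_inj.
Qed.

Lemma class_key_lt b b' : cls b < cls b' -> class_key b < class_key b'.
Proof.
move=> lt_cls; apply: (@leq_trans ((cls b).+1 * #|T|.+1)).
  by rewrite mulSnr ltn_add2l tiebreak_lt.
by apply: leq_trans (leq_addr _ _); rewrite leq_mul2r lt_cls orbT.
Qed.

Lemma class_key_lt_cls b b' : class_key b < class_key b' -> cls b <= cls b'.
Proof. by apply: contraTT; rewrite -!ltnNge => /class_key_lt /ltnW. Qed.

Lemma index_top_key_order :
  (forall b, cls top <= cls b) -> index top (key_order class_key) = 0.
Proof.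
move=> top_min; rewrite index_key_order; last exact: class_key_inj.
apply: eq_card0 => b; apply/negbTE; rewrite inE -leqNgt /class_key {1}/tiebreak eqxx addn0.
by apply: leq_trans (leq_addr _ _); rewrite leq_mul2r top_min orbT.
Qed.
End ClassKey.

(** * The greedy run *)

Section Greedy.
Variables (n p : nat) (O : seq ('I_n * 'I_p)).
Hypothesis O_linorder : is_linorder O.
Local Notation rnd := (round O).

Lemma uniq_O : uniq O.
Proof. by rewrite (perm_uniq O_linorder) enum_uniq. Qed.

Lemma mem_O x : x \in O.
Proof. by rewrite (perm_mem O_linorder) mem_enum. Qed.

Lemma size_O : size O = n * p.
Proof. by rewrite (perm_size O_linorder) -cardT card_prod !card_ord. Qed.

Lemma round_lt x : rnd x < n * p.
Proof. by rewrite -size_O index_mem mem_O. Qed.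

Lemma round_inj : injective rnd.
Proof. by move=> x y; apply: index_inj; rewrite ?mem_O. Qed.

Lemma round_nth x0 t : t < n * p -> rnd (nth x0 O t) = t.
Proof. by move=> lt_t; rewrite /round index_uniq // ?size_O // uniq_O. Qed.

Definition npicked (c : 'I_p) (t : nat) : nat := #|[set j : 'I_n | rnd (j, c) < t]|.

Definition slot (x : 'I_n * 'I_p) : nat := npicked x.2 (rnd x).

Lemma kk_slot j c : kk O j c = n - slot (j, c).
Proof. by []. Qed.

Lemma npicked_le c t : npicked c t <= n.
Proof. by rewrite /npicked -[X in _ <= X]card_ord max_card. Qed.

Lemma npicked_mono c : {homo npicked c : t t' / t <= t'}.
Proof.
move=> t t' le_t; apply/subset_leq_card/subsetP => j; rewrite !inE.
by move/leq_trans; apply.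
Qed.

Lemma slot_lt_npicked x t : rnd x < t -> slot x < npicked x.2 t.
Proof.
case: x => j c /= lt_t; apply/proper_card/properP; split.
  by apply/subsetP => j'; rewrite !inE => /ltn_trans; apply.
by exists j; rewrite !inE ?ltnn.
Qed.

Lemma npicked_le_slot x t : t <= rnd x -> npicked x.2 t <= slot x.
Proof. exact: npicked_mono. Qed.

Lemma slot_lt x : slot x < n.
Proof. exact: leq_trans (slot_lt_npicked (ltnSn _)) (npicked_le _ _). Qed.

Definition gitem (x : 'I_n * 'I_p) : 'I_n := Ordinal (slot_lt x).

Lemma gitem_inj c : injective (fun j => gitem (j, c)).
Proof.
move=> j1 j2 /(congr1 val) /= eq_slot.
case: (ltngtP (rnd (j1, c)) (rnd (j2, c))) => [lt12|lt21|/round_inj [] //].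
- by move/slot_lt_npicked: lt12; rewrite /= -/(slot (j2, c)) eq_slot ltnn.
- by move/slot_lt_npicked: lt21; rewrite /= -/(slot (j1, c)) eq_slot ltnn.
Qed.

Lemma gitem_ne j j' c : j != j' -> gitem (j, c) != gitem (j', c).
Proof. by rewrite (inj_eq (@gitem_inj c)). Qed.

Definition gstate (t : nat) : state n p :=
  [ffun x => if rnd x < t then Some (gitem x) else None].

Definition gbundle (j : 'I_n) : bundle n p := [ffun c => gitem (j, c)].

Lemma remaining_gstate t c d : (d \in remaining (gstate t) c) = (npicked c t <= d).
Proof.
rewrite inE; apply/existsPn/idP => [not_taken|le_d j].
  rewrite leqNgt; apply/negP => lt_d.
  pose X := [set j : 'I_n | rnd (j, c) < t].
  have sub : (fun j => gitem (j, c)) @: X \subset [set d : 'I_n | d < npicked c t].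
    apply/subsetP => _ /imsetP[j jX ->]; rewrite !inE /=.
    by apply: (slot_lt_npicked (x := (j, c))); rewrite inE in jX.
  have /subset_cardP/(_ sub) eq_img :
      #|(fun j => gitem (j, c)) @: X| = #|[set d : 'I_n | d < npicked c t]|.
    by rewrite card_imset ?card_ord_lt ?npicked_le //; apply: gitem_inj.
  have /imsetP[j jX d_eq] : d \in (fun j => gitem (j, c)) @: X by rewrite eq_img inE.
  by move: (not_taken j); rewrite ffunE; rewrite inE in jX; rewrite jX d_eq eqxx.
rewrite ffunE; case: ifP => // lt_t; apply/eqP => [[eq_d]].
have := slot_lt_npicked (x := (j, c)) lt_t.
by rewrite /= -[slot _]/(val (gitem (j, c))) eq_d ltnNge le_d.
Qed.

Lemma available_gstateP t j (b : bundle n p) : reflect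
  (forall c, if rnd (j, c) < t then b c = gitem (j, c) else npicked c t <= b c)
  (b \in available (gstate t) j).
Proof.
apply: (iffP forallP) => avail c; move: (avail c); rewrite ffunE;
  by case: ifP => _; rewrite ?remaining_gstate // => /eqP.
Qed.

Lemma available_gstate_mono t t' j b : t' <= t ->
  b \in available (gstate t) j -> b \in available (gstate t') j.
Proof.
move=> le_t /available_gstateP avail; apply/available_gstateP => c; move: (avail c).
case: (ltnP (rnd (j, c)) t') => lt_t'; first by rewrite (leq_trans lt_t' le_t).
case: ifP => _; first by move=> ->; apply: npicked_le_slot.
exact/leq_trans/npicked_mono.
Qed.

Lemma gbundle_available t j : gbundle j \in available (gstate t) j.
Proof. by apply/available_gstateP => c; rewrite ffunE; case: ltnP => // /npicked_le_slot. Qed.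

Lemma csam_gstate (opt : 'I_n -> bool) (P : 'I_n -> seq (bundle n p)) (x0 : 'I_n * 'I_p) :
  (forall x, (if opt x.1 then opt_choice (P x.1) (gstate (rnd x)) x.1 x.2
              else pes_choice (P x.1) (gstate (rnd x)) x.1 x.2) = Some (gitem x)) ->
  csam O opt P = gstate (n * p).
Proof.
move=> greedy_choice.
suff prefix t : t <= n * p -> foldl (step opt P) (state0 n p) (take t O) = gstate t.
  by rewrite /csam -prefix // -size_O take_size.
elim: t => [|t IH] le_t.
  by rewrite take0; apply/ffunP => x; rewrite !ffunE.
rewrite (take_nth x0) ?size_O // foldl_rcons IH ?(ltnW le_t) //.
set x := nth x0 O t; have rnd_x : rnd x = t by rewrite round_nth.
apply/ffunP => y; rewrite /step !ffunE /=.
case: eqP => [->|ne_yx]; first by rewrite rnd_x ltnSn -rnd_x greedy_choice.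
suff -> : (rnd y < t.+1) = (rnd y < t) by [].
rewrite ltnS leq_eqVlt; case: eqP => //= eq_t.
by case: ne_yx; apply: round_inj; rewrite eq_t rnd_x.
Qed.

Definition picks (j : 'I_n) := [seq x <- O | x.1 == j].

Lemma size_picks j : size (picks j) = p.
Proof.
have /perm_size -> : perm_eq (picks j) [seq (j, c) | c <- enum 'I_p].
  apply: uniq_perm; first exact: filter_uniq uniq_O.
    by rewrite map_inj_uniq ?enum_uniq // => c c' [].
  move=> [j' c]; rewrite mem_filter mem_O andbT /=.
  by apply/eqP/mapP => [<-|[c' _ [-> _]] //]; exists c; rewrite ?mem_enum.
by rewrite size_map size_enum_ord.
Qed.

Lemma nth_picks j (l : 'I_p) : nth (j, l) (picks j) l = (j, Ocat O j l).
Proof.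
have lt_l : l < size (picks j) by rewrite size_picks.
rewrite /Ocat (nth_map (j, l)) //.
have := mem_nth (j, l) lt_l; rewrite mem_filter => /andP[/eqP].
by case: (nth _ _ _) => a b /= ->.
Qed.

Lemma sorted_round : sorted ltn (map rnd O).
Proof.
case def_O : O => [|x0 s] //; rewrite -def_O.
have -> : map rnd O = iota 0 (n * p).
  apply: (@eq_from_nth _ 0); first by rewrite size_map size_iota size_O.
  move=> i; rewrite size_map size_O => lt_i.
  by rewrite (nth_map x0) ?size_O // round_nth // nth_iota.
exact: iota_ltn_sorted.
Qed.

Lemma round_Ocat_lt j (l l' : 'I_p) : (rnd (j, Ocat O j l) < rnd (j, Ocat O j l')) = (l < l').
Proof.
have sorted_picks : sorted ltn (map rnd (picks j)).
  apply: (subseq_sorted ltn_trans _ sorted_round).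
  by apply: map_subseq; exact: filter_subseq.
have mono (k k' : 'I_p) : k < k' -> rnd (j, Ocat O j k) < rnd (j, Ocat O j k').
  move=> lt_k; have := sorted_ltn_nth ltn_trans 0 sorted_picks k k'.
  rewrite size_map size_picks !inE => /(_ (ltn_ord k) (ltn_ord k') lt_k).
  by rewrite (nth_map (j, k)) ?(nth_map (j, k')) ?size_picks // !nth_picks.
apply/idP/idP; last exact: mono.
case: (ltngtP l l') => // [/mono lt_rnd|/val_inj ->]; last by rewrite ltnn.
by move/(ltn_trans lt_rnd); rewrite ltnn.
Qed.

Lemma Ocat_inj j : injective (Ocat O j).
Proof.
move=> l l' eq_O; case: (ltngtP l l') => [lt_l|lt_l|/val_inj //];
  by move: lt_l; rewrite -(round_Ocat_lt j) eq_O ltnn.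
Qed.

Lemma Ocat_surj j c : exists l, Ocat O j l = c.
Proof. by exists (invF (@Ocat_inj j) c); rewrite f_invF. Qed.

(** * The round of the K_j-th choice *)

Definition uncontested (j : 'I_n) (u : nat) : bool :=
  [forall x : 'I_n * 'I_p, ~~ ((u < rnd x) && (rnd x < rnd (j, x.2)))].

Lemma goodK_uncontested j (K : 'I_p) : goodK O j K = uncontested j (rnd (j, Ocat O j K)).
Proof.
apply/forallP/forallP => [good [j' c]|unc l].
  apply/negP => /andP[lt_K lt_j] /=; have [l def_c] := Ocat_surj j c; subst c.
  have lt_Kl : K < l by rewrite -(round_Ocat_lt j); exact: ltn_trans lt_K lt_j.
  move/forallP/(_ j')/forallP/(_ K)/implyP: (good l).
  by rewrite eqxx lt_Kl lt_K lt_j => /(_ isT).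
apply/forallP => j'; apply/forallP => K'; apply/implyP => /andP[/eqP eq_K _].
by rewrite (val_inj eq_K); exact: (unc (j', Ocat O j l)).
Qed.

Lemma contested_agent_ne j (x : 'I_n * 'I_p) : rnd x < rnd (j, x.2) -> x.1 != j.
Proof. by case: x => j' c /=; apply: contraTneq => ->; rewrite ltnn. Qed.

Lemma contested_two_agents j u : ~~ uncontested j u -> 1 < n.
Proof.
case/forallPn => x; rewrite negbK => /andP[_ /contested_agent_ne].
apply: contraNT; rewrite -leqNgt => le_n1; apply/eqP/val_inj.
by move: (ltn_ord x.1) (ltn_ord j) le_n1 => /=; lia.
Qed.

Hypothesis p_gt0 : 0 < p.

Lemma has_goodK j : has (goodK O j) (iota 0 p).
Proof.
apply/hasP; exists p.-1; first by rewrite mem_iota /= add0n prednK // leqnn andbT.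
apply/forallP => l; apply/forallP => j'; apply/forallP => K'; apply/implyP => /andP[_].
by move: (ltn_ord l); lia.
Qed.

Lemma Kj_lt j : Kj O j < p.
Proof. by have := has_goodK j; rewrite has_find size_iota. Qed.

Definition roundK (j : 'I_n) : nat := rnd (j, Ocat O j (Ordinal (Kj_lt j))).

Lemma uncontested_roundK j : uncontested j (roundK j).
Proof.
have := nth_find 0 (has_goodK j); rewrite nth_iota ?Kj_lt // add0n.
by move: (goodK_uncontested j (Ordinal (Kj_lt j))) => /= ->.
Qed.

Lemma contested_before_roundK j c : rnd (j, c) < roundK j -> ~~ uncontested j (rnd (j, c)).
Proof.
have [l <-] := Ocat_surj j c; rewrite /roundK round_Ocat_lt /= => lt_l.
have := before_find 0 lt_l; rewrite nth_iota ?add0n; last exact: ltn_trans lt_l (Kj_lt j).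
by rewrite goodK_uncontested => ->.
Qed.

Lemma prod_Ocat j : \prod_(l < p | Kj O j <= l) kk O j (Ocat O j l) =
  \prod_(c : 'I_p | roundK j <= rnd (j, c)) kk O j c.
Proof.
rewrite [RHS](reindex_inj (@Ocat_inj j)) /=; apply: eq_bigl => l.
by rewrite /roundK [RHS]leqNgt round_Ocat_lt leqNgt.
Qed.

Lemma sum_Ocat j : \sum_(l < p) (kk O j (Ocat O j l) - 1) = \sum_(c : 'I_p) (kk O j c - 1).
Proof. by rewrite [RHS](reindex_inj (@Ocat_inj j)). Qed.

(** * The cyclic allocation *)

Definition first_round (j : 'I_n) : nat := find (fun x : 'I_n * 'I_p => x.1 == j) O.

Lemma first_round_le j c : first_round j <= rnd (j, c).
Proof. by apply: find_le_index; rewrite ?mem_O //= eqxx. Qed.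

Lemma first_roundP j : exists c, first_round j = rnd (j, c).
Proof.
have has_j : has (fun x : 'I_n * 'I_p => x.1 == j) O.
  by apply/hasP; exists (j, Ordinal p_gt0); rewrite ?mem_O //= eqxx.
have := nth_find (j, Ordinal p_gt0) has_j; rewrite -/(first_round j).
case def_x: (nth _ O (first_round j)) => [j' c] /= /eqP eq_j; subst j'; exists c.
by rewrite -def_x round_nth // -size_O -has_find.
Qed.

Lemma first_round_inj : injective first_round.
Proof.
move=> j j'; have [c ->] := first_roundP j; have [c' ->] := first_roundP j'.
by move/round_inj => [].
Qed.

Definition start_rank (j : 'I_n) : nat := #|[set j' | first_round j' < first_round j]|.

Lemma start_rank_lt j : start_rank j < n.
Proof.
rewrite -[n]card_ord -cardsT; apply/proper_card/properP; split; first exact: subsetT.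
by exists j; rewrite !inE ?ltnn.
Qed.

Lemma start_rank_ltE j j' : (start_rank j < start_rank j') = (first_round j < first_round j').
Proof.
apply/idP/idP; last first.
  move=> lt_j; apply/proper_card/properP; split; last by exists j; rewrite !inE ?ltnn.
  by apply/subsetP => x; rewrite !inE => /ltn_trans; apply.
apply: contraTT; rewrite -leqNgt -leqNgt => le_j'; apply/subset_leq_card/subsetP => x.
by rewrite !inE => /leq_trans; apply.
Qed.

Definition start_ord (j : 'I_n) : 'I_n := Ordinal (start_rank_lt j).

Lemma start_ord_inj : injective start_ord.
Proof.
move=> j j' /(congr1 val) /= eq_rank; apply: first_round_inj.
by case: (ltngtP (first_round j) (first_round j')) => // lt_j;
  move: lt_j; rewrite -start_rank_ltE eq_rank ltnn.
Qed.

Definition prev_starter (j : 'I_n) : 'I_n := invF start_ord_inj (ord_pred (start_ord j)).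

Lemma start_rank_prev j :
  start_rank (prev_starter j) = if start_rank j == 0 then n.-1 else (start_rank j).-1.
Proof. by rewrite -[start_rank _]/(val (start_ord _)) f_invF ord_pred_val. Qed.

Lemma prev_starter_inj : injective prev_starter.
Proof. by move=> j j' /(can_inj (f_invF _)) /ord_pred_inj /start_ord_inj. Qed.

Lemma first_round_prev j : start_rank j != 0 -> first_round (prev_starter j) < first_round j.
Proof.
by move=> rank_nz; rewrite -start_rank_ltE start_rank_prev (negbTE rank_nz) prednK // lt0n.
Qed.

Lemma prev_starter_ne j : (start_rank j != 0) || (1 < n) -> prev_starter j != j.
Proof.
move=> nontrivial; apply/eqP => eq_j; have := start_rank_prev j; rewrite eq_j.
by move: nontrivial (start_rank_lt j); case: (start_rank j) => [|r] /=; lia.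
Qed.

Lemma first_round_first_starter j : start_rank j = 0 -> first_round j = 0.
Proof.
move=> rank0; pose x := nth (j, Ordinal p_gt0) O 0.
have rnd_x : rnd x = 0.
  by apply: round_nth; rewrite muln_gt0 p_gt0 andbT (leq_ltn_trans _ (ltn_ord j)).
have first_x : first_round x.1 = 0.
  by apply/eqP; rewrite -leqn0 -rnd_x; case: x rnd_x => j' c _; apply: first_round_le.
apply/eqP; rewrite -leqn0 leqNgt; apply/negP => lt_j.
suff : 0 < start_rank j by rewrite rank0.
by apply/card_gt0P; exists x.1; rewrite inE first_x.
Qed.

Lemma card_first_starters : #|[set j | start_rank j == 0]| <= 1.
Proof.
apply/card_le1_eqP => j j'; rewrite !inE => /eqP rank0 /eqP rank0'.
by apply: start_ord_inj; apply: val_inj; rewrite /= rank0 rank0'.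
Qed.

Definition shift_alloc (j : 'I_n) : bundle n p := gbundle (prev_starter j).

Lemma shift_alloc_is_allocation : is_allocation shift_alloc.
Proof.
move=> c d; have item_inj : injective (fun j => gitem (prev_starter j, c)).
  by move=> j j' /gitem_inj /prev_starter_inj.
exists (invF item_inj d); split => [|j]; rewrite /shift_alloc /gbundle ffunE.
  exact: (f_invF item_inj).
by move=> <-; rewrite invF_f.
Qed.

Lemma shift_alloc_ne j c : (start_rank j != 0) || (1 < n) -> shift_alloc j c != gbundle j c.
Proof. by move/prev_starter_ne => ne_j; rewrite !ffunE gitem_ne. Qed.

Lemma shift_alloc_ne_gbundle j : (start_rank j != 0) || (1 < n) -> shift_alloc j != gbundle j.
Proof.
by move/shift_alloc_ne => ne_c; apply/eqP => eq_b; move: (ne_c (Ordinal p_gt0)); rewrite eq_b eqxx.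
Qed.

Lemma shift_alloc_taken j : start_rank j != 0 ->
  exists c, shift_alloc j c < gbundle j c /\ shift_alloc j c < npicked c (first_round j).
Proof.
move=> rank_nz; have [c def_c] := first_roundP (prev_starter j).
have lt_first : rnd (prev_starter j, c) < first_round j by rewrite -def_c first_round_prev.
exists c; rewrite !ffunE; split; last exact: (slot_lt_npicked (x := (_, c))).
apply: leq_trans (slot_lt_npicked (x := (_, c)) lt_first) _.
exact: (npicked_le_slot (x := (j, c)) (first_round_le j c)).
Qed.

Lemma shift_alloc_unavailable j : start_rank j != 0 ->
  shift_alloc j \notin available (gstate (first_round j)) j.
Proof.
move=> /shift_alloc_taken [c [_ taken]]; apply/negP => /available_gstateP /(_ c).
by rewrite ltnNge first_round_le /= leqNgt taken.
Qed.

Definition first_dev (j : 'I_n) (b : bundle n p) : nat :=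
  find (fun x : 'I_n * 'I_p => (x.1 == j) && (b x.2 != gitem x)) O.

Lemma first_dev_le j (b : bundle n p) c : b c != gitem (j, c) -> first_dev j b <= rnd (j, c).
Proof. by move=> ne_b; apply: find_le_index; rewrite ?mem_O //= eqxx. Qed.

Lemma first_dev_le_np j (b : bundle n p) : first_dev j b <= n * p.
Proof. by rewrite -size_O find_size. Qed.

Lemma first_dev_ge j (b : bundle n p) t : t <= n * p ->
  (forall c, rnd (j, c) < t -> b c = gitem (j, c)) -> t <= first_dev j b.
Proof.
move=> le_t agree; apply: (find_ge (x0 := (j, Ordinal p_gt0))); first by rewrite size_O.
move=> i lt_i; have lt_np : i < n * p := leq_trans lt_i le_t.
have := round_nth (j, Ordinal p_gt0) lt_np; case: (nth _ O i) => j' c rnd_i /=.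
by apply/negP => /andP[/eqP eq_j]; subst j'; rewrite agree ?rnd_i // eqxx.
Qed.

Definition upd (b : bundle n p) (c : 'I_p) (d : 'I_n) : bundle n p :=
  [ffun c' => if c' == c then d else b c'].

Lemma upd_eq b c d : upd b c d c = d.
Proof. by rewrite ffunE eqxx. Qed.

Lemma upd_neq b c d c' : c' != c -> upd b c d c' = b c'.
Proof. by rewrite ffunE => /negbTE ->. Qed.

Lemma upd_gitem_available j t (x : 'I_n * 'I_p) : t <= rnd x -> t <= rnd (j, x.2) ->
  upd (gbundle j) x.2 (gitem x) \in available (gstate t) j.
Proof.
move=> le_x le_jx; apply/available_gstateP => c; case: (eqVneq c x.2) => [->|ne_c].
  by rewrite ltnNge le_jx /= upd_eq; apply: npicked_le_slot.
by rewrite upd_neq // ffunE; case: ltnP => // /npicked_le_slot.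
Qed.

Lemma first_dev_upd_gitem j (x : 'I_n * 'I_p) :
  rnd (j, x.2) <= first_dev j (upd (gbundle j) x.2 (gitem x)).
Proof.
apply: first_dev_ge => [|c lt_c]; first exact: ltnW (round_lt _).
by rewrite upd_neq ?ffunE //; apply: contraTneq lt_c => ->; rewrite ltnn.
Qed.

(** * Optimistic agents *)

Section Optimistic.
Variable j : 'I_n.

Definition avail_start : pred (bundle n p) := available (gstate (first_round j)) j.
Definition avail_K : pred (bundle n p) := available (gstate (roundK j)) j.

(* The top bundle fixes the first choice of the agent who starts first.  When
   her later choices are contested, her greedy bundle must stay low, and this
   bundle, deviating from it only in a category someone else takes first,
   leads instead. *)
Definition detour : bundle n p :=
  if [pick x | (first_round j < rnd x) && (rnd x < rnd (j, x.2))] is Some x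
  then upd (gbundle j) x.2 (gitem x) else gbundle j.

Definition opt_top : bundle n p :=
  if start_rank j != 0 then shift_alloc j
  else if uncontested j (first_round j) then gbundle j else detour.

(* Bundles gone at j's first choice never affect her choices; they share the
   top class with [opt_top]. *)
Definition opt_class (b : bundle n p) : nat :=
  if (b \notin avail_start) || (b == opt_top) then 0
  else if b == shift_alloc j then 1
  else if b \in avail_K then (if b == gbundle j then n * p + 3 else n * p + 4)
  else 2 + (n * p - first_dev j b).

Definition opt_profile : seq (bundle n p) := key_order (class_key opt_class opt_top).

Local Notation okey := (class_key opt_class opt_top).

Lemma first_round_le_roundK : first_round j <= roundK j.
Proof. exact: first_round_le. Qed.

Lemma availK_start b : b \in avail_K -> b \in avail_start.
Proof. exact: available_gstate_mono first_round_le_roundK. Qed.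

Lemma roundK_le_first_round : uncontested j (first_round j) -> roundK j <= first_round j.
Proof.
have [c def_c] := first_roundP j; rewrite def_c leqNgt => unc.
by apply/negP => /contested_before_roundK; rewrite unc.
Qed.

Lemma npicked_roundK c : roundK j <= rnd (j, c) -> npicked c (roundK j) = slot (j, c).
Proof.
move=> le_K; apply/eqP; rewrite eqn_leq (npicked_le_slot (x := (j, c)) le_K) /=.
apply/subset_leq_card/subsetP => j'; rewrite !inE => lt_j'.
move: (forallP (uncontested_roundK j) (j', c)); rewrite /= lt_j' andbT -leqNgt leq_eqVlt.
case/orP => // /eqP /round_inj [eq_j' _]; subst j'.
by rewrite ltnn in lt_j'.
Qed.

Lemma upd_gitem_notin_availK (x : 'I_n * 'I_p) : rnd x < rnd (j, x.2) ->
  upd (gbundle j) x.2 (gitem x) \notin avail_K.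
Proof.
move=> lt_x; have ne_j := contested_agent_ne lt_x.
apply/negP => /available_gstateP /(_ x.2); rewrite upd_eq; case: ltnP => [_ eq_x|le_K].
  by move: (gitem_ne x.2 ne_j); case: x {lt_x ne_j} eq_x => j' c /= ->; rewrite eqxx.
have lt_xK : rnd x < roundK j.
  move: (forallP (uncontested_roundK j) x); rewrite lt_x andbT -leqNgt leq_eqVlt.
  by case/orP => // /eqP /round_inj eq_x; rewrite eq_x eqxx in ne_j.
by move: (slot_lt_npicked lt_xK); rewrite ltnNge => /negP.
Qed.

Lemma avail_start_first_starter b : start_rank j = 0 -> b \in avail_start.
Proof.
move=> /first_round_first_starter first0; apply/available_gstateP => c; rewrite first0 ltn0.
by rewrite /npicked (_ : [set _ | _] = set0) ?cards0 //; apply/setP => j'; rewrite !inE ltn0.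
Qed.

Lemma detour_spec : ~~ uncontested j (first_round j) ->
  exists x : 'I_n * 'I_p,
    [/\ first_round j < rnd x, rnd x < rnd (j, x.2) & detour = upd (gbundle j) x.2 (gitem x)].
Proof.
move=> contested; rewrite /detour; case: pickP => [x /andP[lt_x lt_jx] | none]; first by exists x.
case/forallPn: contested => x; rewrite negbK => contested_x.
by move: (none x); rewrite contested_x.
Qed.

Lemma detour_ne_gbundle : ~~ uncontested j (first_round j) -> detour != gbundle j.
Proof.
move=> /detour_spec [x [_ lt_jx ->]]; apply/eqP => /ffunP /(_ x.2).
rewrite upd_eq ffunE => eq_x; move: (gitem_ne x.2 (contested_agent_ne lt_jx)).
by case: x {lt_jx} eq_x => j' c /= ->; rewrite eqxx.
Qed.

Lemma opt_top_nontrivial : opt_top != gbundle j -> (start_rank j != 0) || (1 < n).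
Proof.
rewrite /opt_top; case: ifP => [//|_]; case: ifP => [_|contested _]; first by rewrite eqxx.
by rewrite (contested_two_agents (negbT contested)) orbT.
Qed.

Lemma opt_top_notin_availK : opt_top != gbundle j -> opt_top \notin avail_K.
Proof.
rewrite /opt_top; case: ifP => [rank_nz _|_].
  by apply: contra (shift_alloc_unavailable rank_nz) => /availK_start.
case: ifP => [_|contested _]; first by rewrite eqxx.
by have [x [_ lt_x ->]] := detour_spec (negbT contested); apply: upd_gitem_notin_availK.
Qed.

Lemma shift_alloc_notin_availK : opt_top != gbundle j -> shift_alloc j \notin avail_K.
Proof.
move=> top_ne; case: (eqVneq (start_rank j) 0) => [rank0|rank_nz]; last first.
  by apply: contra (shift_alloc_unavailable rank_nz) => /availK_start.
have contested : ~~ uncontested j (first_round j).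
  by apply: contra top_ne => unc; rewrite /opt_top rank0 eqxx /= unc.
have lt_first : first_round j < roundK j.
  rewrite ltn_neqAle first_round_le_roundK andbT.
  by apply: contraNneq contested => ->; exact: uncontested_roundK.
have [c def_c] := first_roundP j.
apply/negP => /available_gstateP /(_ c); rewrite -def_c lt_first => eq_c.
by move: (shift_alloc_ne c (opt_top_nontrivial top_ne)); rewrite eq_c ffunE eqxx.
Qed.

Lemma opt_class_gbundle : opt_top != gbundle j -> opt_class (gbundle j) = n * p + 3.
Proof.
move=> top_ne; rewrite /opt_class gbundle_available /= eq_sym (negbTE top_ne) eq_sym.
by rewrite (negbTE (shift_alloc_ne_gbundle (opt_top_nontrivial top_ne))) gbundle_available eqxx.
Qed.

Lemma opt_class_le b : b \notin avail_K -> opt_class b <= 2 + (n * p - first_dev j b).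
Proof. by move=> /negbTE b_K; rewrite /opt_class b_K; do 2 case: ifP => _ //. Qed.

Lemma okey_notin_availK b : b \notin avail_K -> okey b < okey (gbundle j).
Proof.
move=> b_K; case: (eqVneq opt_top (gbundle j)) => [top_eq|top_ne]; last first.
  apply: class_key_lt; rewrite opt_class_gbundle //.
  by apply: leq_ltn_trans (opt_class_le b_K) _; lia.
exfalso; move: top_eq b_K; rewrite /opt_top; case: ifP => [rank_nz eq_b|/negbFE/eqP rank0].
  by move: (shift_alloc_unavailable rank_nz); rewrite eq_b gbundle_available.
case: ifP => [unc _|contested eq_b]; last first.
  by move: (detour_ne_gbundle (negbT contested)); rewrite eq_b eqxx.
have roundK0 : roundK j = first_round j.
  by apply/eqP; rewrite eqn_leq roundK_le_first_round // first_round_le_roundK.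
by rewrite /avail_K roundK0 (avail_start_first_starter _ rank0).
Qed.

Lemma okey_gbundle_lt b : b \in avail_K -> b != gbundle j -> okey (gbundle j) < okey b.
Proof.
move=> b_K b_ne; case: (eqVneq opt_top (gbundle j)) => [top_eq|top_ne].
  have key0 : okey (gbundle j) = 0.
    by rewrite /class_key /opt_class /tiebreak top_eq eqxx orbT.
  rewrite key0 lt0n; apply: contra b_ne => /eqP; rewrite -key0 => /class_key_inj ->.
  exact: eqxx.
apply: class_key_lt; rewrite opt_class_gbundle // /opt_class (availK_start b_K) /=.
have -> : (b == opt_top) = false by apply: contraNF (opt_top_notin_availK top_ne) => /eqP <-.
have -> : (b == shift_alloc j) = false.
  by apply: contraNF (shift_alloc_notin_availK top_ne) => /eqP <-.
by rewrite b_K (negbTE b_ne); lia.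
Qed.

Section Improve.
Variable c : 'I_p.
Local Notation t := (rnd (j, c)).
Local Notation avail_t := (available (gstate (rnd (j, c))) j).

Definition improvable (b : bundle n p) : Prop :=
  exists2 b', b' \in avail_t & b' c = gbundle j c /\ okey b' < okey b.

Lemma improvable_late b : roundK j <= t -> b \in avail_t -> b c != gbundle j c -> improvable b.
Proof.
move=> le_K b_t b_c; exists (gbundle j); first exact: gbundle_available.
split=> //; apply: okey_gbundle_lt; first exact: available_gstate_mono le_K b_t.
by apply: contraNneq b_c => ->.
Qed.

Hypothesis early : t < roundK j.

Lemma contested_start : ~~ uncontested j (first_round j).
Proof.
have [c0 def_c0] := first_roundP j; rewrite def_c0; apply: contested_before_roundK.
by rewrite -def_c0; exact: leq_ltn_trans (first_round_le j c) early.
Qed.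

Lemma early_notin_availK (b : bundle n p) : b c != gbundle j c -> b \notin avail_K.
Proof.
move=> b_c; apply/negP => /available_gstateP /(_ c); rewrite early => eq_b.
by rewrite eq_b ffunE eqxx in b_c.
Qed.

Lemma improvable_shift_alloc : shift_alloc j \in avail_t -> shift_alloc j c != gbundle j c ->
  improvable (shift_alloc j).
Proof.
move=> alloc_t alloc_c; have alloc_start := available_gstate_mono (first_round_le j c) alloc_t.
have rank0 : start_rank j = 0.
  by apply/eqP; apply: contraTT alloc_start => /shift_alloc_unavailable.
have top_eq : opt_top = detour by rewrite /opt_top rank0 eqxx /= (negbTE contested_start).
have nontrivial : (start_rank j != 0) || (1 < n).
  by rewrite (contested_two_agents contested_start) orbT.
have t_first : t = first_round j.
  have [c0 def_c0] := first_roundP j.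
  apply/eqP; rewrite eqn_leq first_round_le andbT leqNgt; apply/negP => lt_c0.
  move/available_gstateP: alloc_t => /(_ c0); rewrite -def_c0 lt_c0 => eq_c0.
  by move: (shift_alloc_ne c0 nontrivial); rewrite eq_c0 ffunE eqxx.
have [x [lt_x lt_jx def_detour]] := detour_spec contested_start.
have ne_c : c != x.2 by apply: contraTneq lt_jx => <-; rewrite t_first -leqNgt ltnW.
have detour_t : detour \in avail_t.
  by rewrite def_detour t_first; apply: upd_gitem_available; [exact: ltnW | exact: first_round_le].
exists detour => //; split; first by rewrite def_detour upd_neq.
apply: class_key_lt; rewrite /opt_class -top_eq eqxx orbT alloc_start /=.
have -> : (shift_alloc j == opt_top) = false.
  apply/negP => /eqP eq_top; move: (shift_alloc_ne c nontrivial).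
  by rewrite eq_top top_eq def_detour upd_neq // eqxx.
by rewrite eqxx.
Qed.

Lemma opt_top_early : opt_top \in avail_t -> opt_top c = gbundle j c.
Proof.
rewrite /opt_top; case: ifP => [rank_nz top_t|_].
  by move: (shift_alloc_unavailable rank_nz); rewrite (available_gstate_mono (first_round_le j c)).
rewrite (negbTE contested_start); have [x [_ lt_jx ->]] := detour_spec contested_start.
case: (eqVneq c x.2) => [eq_c|ne_c]; last by rewrite upd_neq.
move=> /available_gstateP /(_ x.2); rewrite eq_c ltnn upd_eq.
by move: (slot_lt_npicked lt_jx); rewrite ltnNge => /negP.
Qed.

Lemma improvable_contested b : b \in avail_t -> b c != gbundle j c ->
  b != opt_top -> b != shift_alloc j -> improvable b.
Proof.
move=> b_t b_c b_top b_alloc; have b_start := available_gstate_mono (first_round_le j c) b_t.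
have [x] := forallPn (contested_before_roundK early); rewrite negbK => /andP[lt_x lt_jx].
have ne_c : c != x.2 by apply: contraTneq lt_jx => <-; rewrite -leqNgt ltnW.
exists (upd (gbundle j) x.2 (gitem x)).
  by apply: upd_gitem_available; apply: ltnW; [exact: lt_x | exact: ltn_trans lt_x lt_jx].
split; first by rewrite upd_neq // ffunE.
apply: class_key_lt; apply: leq_ltn_trans (opt_class_le (upd_gitem_notin_availK lt_jx)) _.
rewrite /opt_class (negbTE (early_notin_availK b_c)) b_start /= (negbTE b_top) (negbTE b_alloc).
have lt_dev : first_dev j b < first_dev j (upd (gbundle j) x.2 (gitem x)).
  apply: leq_ltn_trans (_ : first_dev j b <= t) _.
    by apply: first_dev_le; rewrite ffunE in b_c.
  exact: ltn_trans lt_x (leq_trans lt_jx (first_dev_upd_gitem j x)).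
move: lt_dev (first_dev_le_np j (upd (gbundle j) x.2 (gitem x))).
by move: (first_dev j _) (first_dev j _) (n * p) => a a' np; lia.
Qed.
End Improve.

Lemma opt_choice_gitem c :
  opt_choice opt_profile (gstate (rnd (j, c))) j c = Some (gitem (j, c)).
Proof.
have improvable_all b : b \in available (gstate (rnd (j, c))) j -> b c != gbundle j c ->
    improvable c b.
  move=> b_t b_c; case: (leqP (roundK j) (rnd (j, c))) => [le_K|early].
    exact: improvable_late.
  case: (eqVneq b (shift_alloc j)) => [eq_b|b_alloc].
    by rewrite eq_b in b_t b_c *; exact: improvable_shift_alloc.
  case: (eqVneq b opt_top) => [b_top|b_top]; last exact: improvable_contested.
  by move: b_c; rewrite b_top opt_top_early ?eqxx // -b_top.
have rank_lt b b' : okey b < okey b' -> rank opt_profile b < rank opt_profile b'.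
  by rewrite ltnS; apply: index_key_order_lt; exact: class_key_inj.
rewrite /opt_choice; case: pickP => [b /andP[b_t /forallP b_top] | none] /=.
  congr Some; apply/eqP; apply: contraT => b_c.
  have [|b' b'_t [_ lt_key]] := improvable_all _ b_t; first by rewrite ffunE.
  by move: (b_top b'); rewrite b'_t /= leqNgt rank_lt.
exfalso; case: (arg_minnP (rank opt_profile) (gbundle_available (rnd (j, c)) j)) => b b_t b_min.
have b_avail : b \in available (gstate (rnd (j, c))) j by [].
move: (none b); rewrite b_avail /= => /negbT/negP; apply.
by apply/forallP => b'; apply/implyP => /b_min.
Qed.

Lemma card_availK :
  #|[pred b | b \in avail_K]| = \prod_(c : 'I_p | roundK j <= rnd (j, c)) kk O j c.
Proof.
pose D c := if rnd (j, c) < roundK j then pred1 (gitem (j, c))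
            else [pred d : 'I_n | npicked c (roundK j) <= d].
have -> : #|[pred b | b \in avail_K]| = #|family D|.
  apply: eq_card => b; rewrite inE; apply/available_gstateP/familyP => avail c;
    by move: (avail c); rewrite /D; case: ifP => _ //= /eqP.
rewrite card_family foldrE big_map big_enum /= [RHS]big_mkcond /=; apply: eq_bigr => c _.
rewrite /D; case: ltnP => [_|le_K] /=.
  by rewrite (@eq_card _ _ (pred1 (gitem (j, c)))) // card1.
rewrite kk_slot -npicked_roundK // -card_ord_ge.
by apply: eq_card => d; rewrite !inE.
Qed.

Lemma rank_opt_profile :
  rank opt_profile (gbundle j) = n ^ p + 1 - \prod_(c : 'I_p | roundK j <= rnd (j, c)) kk O j c.
Proof.
rewrite /rank index_key_order; last exact: class_key_inj.
have -> : #|[pred b | okey b < okey (gbundle j)]| = #|[predC [pred b | b \in avail_K]]|.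
  apply: eq_card => b; rewrite !inE; apply/idP/idP => [lt_b|]; last exact: okey_notin_availK.
  apply/negP => b_K; case: (eqVneq b (gbundle j)) => [eq_b|ne_b].
    by rewrite eq_b ltnn in lt_b.
  by move: (okey_gbundle_lt b_K ne_b); rewrite ltnNge ltnW.
have := cardC [pred b | b \in avail_K]; rewrite card_availK card_ffun !card_ord => <-.
by rewrite -addnA addKn addn1.
Qed.
Lemma opt_shift_alloc_top : start_rank j != 0 -> rank opt_profile (shift_alloc j) = 1.
Proof.
move=> rank_nz; have top_eq : opt_top = shift_alloc j by rewrite /opt_top rank_nz.
rewrite /rank /opt_profile -top_eq index_top_key_order // => b.
by rewrite /opt_class eqxx orbT.
Qed.
End Optimistic.

(** * Pessimistic agents *)

Definition single_raise (j : 'I_n) (b : bundle n p) : bool :=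
  [exists c, [forall c', (c' != c) ==> (b c' == gbundle j c')] && (gbundle j c < b c)].

Section Pessimistic.
Variable j : 'I_n.

Definition pes_class (b : bundle n p) : nat :=
  if b == gbundle j then 2 else if single_raise j b then 3 + n * p - first_dev j b else 1.

Definition pes_profile : seq (bundle n p) := key_order (class_key pes_class (shift_alloc j)).

Local Notation pkey := (class_key pes_class (shift_alloc j)).

Lemma single_raise_upd c (d : 'I_n) : gbundle j c < d -> single_raise j (upd (gbundle j) c d).
Proof.
move=> lt_d; apply/existsP; exists c; rewrite upd_eq lt_d andbT.
by apply/forallP => c'; apply/implyP => ne_c; rewrite upd_neq.
Qed.

Lemma pkey_upd c (b : bundle n p) d : b \in available (gstate (rnd (j, c))) j ->
  b c = gbundle j c -> d \in remaining (gstate (rnd (j, c))) c -> d != gitem (j, c) ->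
  pkey b < pkey (upd (gbundle j) c d).
Proof.
move=> b_t b_c; rewrite remaining_gstate => le_d ne_d.
have lt_d : gbundle j c < d by rewrite ffunE ltn_neqAle eq_sym ne_d.
have upd_ne : (upd (gbundle j) c d == gbundle j) = false.
  by apply/negP => /eqP /ffunP /(_ c); rewrite upd_eq => eq_d; rewrite eq_d ltnn in lt_d.
have dev_upd : first_dev j (upd (gbundle j) c d) <= rnd (j, c).
  by apply: first_dev_le; rewrite upd_eq.
have lt_np : rnd (j, c) < n * p := round_lt _.
apply: class_key_lt; rewrite /pes_class upd_ne single_raise_upd //.
case: ifP => _; first by move: dev_upd lt_np; move: (first_dev j _) (n * p) => a np; lia.
case: ifP => b_raise; last by move: dev_upd lt_np; move: (first_dev j _) (n * p) => a np; lia.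
have dev_b : (rnd (j, c)).+1 <= first_dev j b.
  apply: first_dev_ge => // c' lt_c'; rewrite ltnS leq_eqVlt in lt_c'.
  case/orP: lt_c' => [/eqP /round_inj [->]|lt_c']; first by rewrite b_c ffunE.
  by move/available_gstateP: b_t => /(_ c'); rewrite lt_c'.
move: (first_dev_le_np j b) dev_b dev_upd lt_np.
by move: (first_dev j b) (first_dev j _) (n * p) => a a' np; lia.
Qed.

Lemma worst_rank_gitem_lt c d : d \in remaining (gstate (rnd (j, c))) c -> d != gitem (j, c) ->
  worst_rank pes_profile (gstate (rnd (j, c))) j c (gitem (j, c))
  < worst_rank pes_profile (gstate (rnd (j, c))) j c d.
Proof.
move=> d_rem ne_d; set t := rnd (j, c); set b' := upd (gbundle j) c d.
have b'_t : b' \in available (gstate t) j.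
  apply/available_gstateP => c'; case: (eqVneq c' c) => [->|ne_c].
    by rewrite ltnn upd_eq -remaining_gstate.
  by rewrite upd_neq // ffunE; case: ltnP => // /npicked_le_slot.
apply: leq_trans (_ : rank pes_profile b' <= _); last first.
  by apply: (leq_bigmax_cond b'); rewrite b'_t upd_eq eqxx.
rewrite -[rank _ b']prednK // ltnS; apply/bigmax_leqP => b /andP[b_t /eqP b_c].
rewrite -ltnS prednK // ltnS; apply: index_key_order_lt; first exact: class_key_inj.
by apply: pkey_upd; rewrite // b_c ffunE.
Qed.

Lemma pes_choice_gitem c :
  pes_choice pes_profile (gstate (rnd (j, c))) j c = Some (gitem (j, c)).
Proof.
have gitem_rem : gitem (j, c) \in remaining (gstate (rnd (j, c))) c.
  by rewrite remaining_gstate; exact: leqnn.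
rewrite /pes_choice; case: pickP => [d /andP[d_rem /forallP d_min] | none].
  congr Some; apply/eqP; apply: contraT => ne_d.
  by move: (d_min (gitem (j, c))); rewrite gitem_rem /= leqNgt worst_rank_gitem_lt.
exfalso; move: (none (gitem (j, c))); rewrite gitem_rem /= => /negbT/negP; apply.
apply/forallP => d; apply/implyP => d_rem.
by case: (eqVneq d (gitem (j, c))) => [->//|ne_d]; apply/ltnW/worst_rank_gitem_lt.
Qed.

Lemma card_single_raise : #|[pred b | single_raise j b]| = \sum_(c : 'I_p) (kk O j c - 1).
Proof.
pose raises := [set x : 'I_p * 'I_n | gbundle j x.1 < x.2].
have upd_inj : {in raises &, injective (fun x => upd (gbundle j) x.1 x.2)}.
  move=> [c d] [c' d']; rewrite !inE /= => lt_d _ /ffunP eq_upd.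
  case: (eqVneq c c') => [eq_c|ne_c]; first by subst c'; move: (eq_upd c); rewrite !upd_eq => ->.
  by move: (eq_upd c); rewrite upd_eq upd_neq // => eq_d; rewrite eq_d ltnn in lt_d.
have -> : #|[pred b | single_raise j b]| = #|(fun x => upd (gbundle j) x.1 x.2) @: raises|.
  apply: eq_card => b; rewrite inE; apply/idP/imsetP => [/existsP[c /andP[/forallP b_eq lt_c]]|].
    exists (c, b c); first by rewrite inE.
    apply/ffunP => c'; rewrite ffunE; case: eqP => [->//|/eqP ne_c].
    by move: (b_eq c'); rewrite ne_c => /eqP.
  by case=> -[c d]; rewrite inE /= => lt_d ->; apply: single_raise_upd.
rewrite card_in_imset // -sum1_card big_mkcond /=.
rewrite (eq_bigr (fun x => (fun c (d : 'I_n) => (gbundle j c < d) : nat) x.1 x.2)); last first.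
  by move=> x _; rewrite inE; case: ifP.
rewrite -(pair_bigA _ (fun c (d : 'I_n) => (gbundle j c < d) : nat)) /=; apply: eq_bigr => c _.
rewrite kk_slot; have -> : slot (j, c) = gbundle j c by rewrite ffunE.
rewrite -subnDA addn1 -card_ord_ge -sum1_card [RHS]big_mkcond /=.
by apply: eq_bigr => d _; rewrite inE.
Qed.

Lemma rank_pes_profile : rank pes_profile (gbundle j) = n ^ p - \sum_(c : 'I_p) (kk O j c - 1).
Proof.
have class_gbundle : pes_class (gbundle j) = 2 by rewrite /pes_class eqxx.
have not_raise : ~~ single_raise j (gbundle j) by apply/existsPn => c; rewrite ltnn andbF.
rewrite /rank index_key_order; last exact: class_key_inj.
have -> : #|[pred b | pkey b < pkey (gbundle j)]| =
          #|[predD1 [predC [pred b | single_raise j b]] & gbundle j]|.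
  apply: eq_card => b; rewrite !inE; apply/idP/andP => [lt_b|[ne_b b_raise]]; last first.
    by apply: class_key_lt; rewrite class_gbundle /pes_class (negbTE ne_b) (negbTE b_raise).
  have := class_key_lt_cls lt_b; rewrite class_gbundle /pes_class.
  case: eqP => [eq_b|/eqP ne_b]; first by rewrite eq_b ltnn in lt_b.
  case: ifP => // _; move: (first_dev_le_np j b).
  by move: (first_dev j b) (n * p) => a np; lia.
have := cardD1 (gbundle j) [predC [pred b | single_raise j b]].
rewrite !inE not_raise add1n => <-; rewrite -card_single_raise.
have := cardC [pred b | single_raise j b]; rewrite card_ffun !card_ord => <-.
by rewrite addKn.
Qed.
Lemma shift_alloc_not_raise : start_rank j != 0 -> ~~ single_raise j (shift_alloc j).
Proof.
move=> /shift_alloc_taken [c [lt_c _]]; apply/existsPn => c'; apply/nandP.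
case: (eqVneq c c') => [<-|ne_c]; first by right; rewrite -leqNgt ltnW.
by left; apply/forallPn; exists c; rewrite ne_c /=; apply: contraTN lt_c => /eqP ->; rewrite ltnn.
Qed.

Lemma pes_class_gt0 b : 0 < pes_class b.
Proof.
rewrite /pes_class; do 2 case: ifP => // _.
by move: (first_dev_le_np j b); move: (first_dev j b) (n * p) => a np; lia.
Qed.

Lemma pes_shift_alloc_top : ~~ single_raise j (shift_alloc j) ->
  (start_rank j != 0) || (1 < n) -> rank pes_profile (shift_alloc j) = 1.
Proof.
move=> not_raise nontrivial; rewrite /rank index_top_key_order // => b.
by rewrite /pes_class (negbTE (shift_alloc_ne_gbundle nontrivial)) (negbTE not_raise) pes_class_gt0.
Qed.
End Pessimistic.

Section FirstStarter.
Variable j : 'I_n.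
Hypothesis rank0 : start_rank j = 0.

Lemma opt_shift_alloc_first : rank (opt_profile j) (shift_alloc j) <= 2.
Proof.
rewrite /rank /opt_profile ltnS.
apply: (@index_key_order_le1 _ _ (@class_key_inj _ (opt_class j) (opt_top j)) (opt_top j)) => b.
case: (eqVneq b (opt_top j)) => [//|ne_top] lt_b; exfalso.
have key_top : class_key (opt_class j) (opt_top j) (opt_top j) = 0.
  by rewrite /class_key /opt_class /tiebreak eqxx orbT.
case: (eqVneq (shift_alloc j) (opt_top j)) => [eq_top|ne_shift].
  by move: lt_b; rewrite eq_top key_top.
case: (eqVneq b (shift_alloc j)) => [eq_b|ne_b]; first by rewrite eq_b ltnn in lt_b.
move: (class_key_lt_cls lt_b); rewrite /opt_class !avail_start_first_starter //=.
rewrite (negbTE ne_top) (negbTE ne_shift) (negbTE ne_b) eqxx.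
by case: ifP => _; [case: ifP|]; lia.
Qed.

Lemma pes_shift_alloc_first : rank (pes_profile j) (shift_alloc j) <= 2.
Proof.
have [two|one] := ltnP 1 n; last first.
  rewrite /rank ltnS -ltnS (leq_trans (_ : _ < size (pes_profile j))) //.
    by rewrite index_mem (perm_mem (key_order_linorder _)) mem_enum.
  rewrite (perm_size (key_order_linorder _)) -cardT card_ffun !card_ord.
  by rewrite (_ : n = 1) ?exp1n //; move: (ltn_ord j) one; lia.
have nontrivial : (start_rank j != 0) || (1 < n) by rewrite two orbT.
have [raise|] := boolP (single_raise j (shift_alloc j)); last first.
  by move/pes_shift_alloc_top => ->.
have [c /andP[/forallP same_off lt_c]] := existsP raise.
have only_c c' : c' = c. (* [shift_alloc j] differs from [gbundle j] everywhere *)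
  apply/eqP; apply: contraT => ne_c; move: (same_off c'); rewrite ne_c /=.
  by rewrite (negbTE (shift_alloc_ne c' nontrivial)).
have round_c : rnd (j, c) = 0.
  by have [c0 def_c0] := first_roundP j; rewrite -(only_c c0) -def_c0 first_round_first_starter.
have gbundle_c : gbundle j c = 0 :> nat.
  rewrite ffunE /= /slot /= round_c /npicked; apply/eqP; rewrite cards_eq0; apply/eqP/setP => j'.
  by rewrite !inE ltn0.
have class_bottom b : b != gbundle j -> pes_class j b = 3 + n * p.
  move=> ne_b; have ne_c : b c != gbundle j c.
    by apply: contra ne_b => /eqP eq_c; apply/eqP/ffunP => c'; rewrite (only_c c').
  have dev0 : first_dev j b = 0.
    by apply/eqP; rewrite -leqn0 -round_c; apply: first_dev_le; rewrite ffunE in ne_c.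
  have lt_bc : gbundle j c < b c.
    rewrite gbundle_c lt0n; apply: contra ne_c => /eqP b_c0.
    by apply/eqP/val_inj; rewrite /= b_c0 gbundle_c.
  rewrite /pes_class (negbTE ne_b) dev0 subn0; case: ifP => // /negbT /existsPn /(_ c).
  by rewrite lt_bc andbT => /forallPn [c']; rewrite (only_c c') eqxx.
rewrite /rank /pes_profile ltnS.
apply: (@index_key_order_le1 _ _ (@class_key_inj _ (pes_class j) (shift_alloc j)) (gbundle j)) => b.
apply: contraTeq => ne_b; rewrite -leqNgt /class_key {1}/tiebreak eqxx addn0.
by rewrite !class_bottom // ?shift_alloc_ne_gbundle // leq_addr.
Qed.
End FirstStarter.

Variable opt : 'I_n -> bool.

Definition profile (j : 'I_n) : seq (bundle n p) :=
  if opt j then opt_profile j else pes_profile j.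

Lemma profile_linorder j : is_linorder (profile j).
Proof. by rewrite /profile; case: (opt j); apply: key_order_linorder. Qed.

Lemma csam_profile j c : csam O opt profile (j, c) = Some (gbundle j c).
Proof.
rewrite (@csam_gstate opt profile (j, c)) => [|[j' c'] /=]; first by rewrite !ffunE round_lt.
by rewrite /profile; case: (opt j'); [apply: opt_choice_gitem | apply: pes_choice_gitem].
Qed.

Lemma rank_profile_gbundle j : rank (profile j) (gbundle j) =
  if opt j then n ^ p + 1 - \prod_(l < p | Kj O j <= l) kk O j (Ocat O j l)
  else n ^ p - \sum_(l < p) (kk O j (Ocat O j l) - 1).
Proof.
rewrite /profile prod_Ocat sum_Ocat.
by case: (opt j); [apply: rank_opt_profile | apply: rank_pes_profile].
Qed.

Lemma rank_profile_shift_alloc j : rank (profile j) (shift_alloc j) <= 2.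
Proof.
have [rank0|rank_nz] := eqVneq (start_rank j) 0; rewrite /profile; case: (opt j).
- exact: opt_shift_alloc_first.
- exact: pes_shift_alloc_first.
- by rewrite opt_shift_alloc_top.
- by rewrite pes_shift_alloc_top ?rank_nz ?shift_alloc_not_raise.
Qed.

Lemma card_top_ranked : n.-1 <= #|[set j | rank (profile j) (shift_alloc j) == 1]|.
Proof.
apply: (@leq_trans #|[set j | start_rank j != 0]|); last first.
  apply/subset_leq_card/subsetP => j; rewrite !inE /profile => rank_nz.
  by case: (opt j);
    rewrite ?opt_shift_alloc_top ?pes_shift_alloc_top ?rank_nz ?shift_alloc_not_raise.
have := cardsC [set j | start_rank j == 0]; rewrite card_ord.
rewrite (_ : ~: _ = [set j | start_rank j != 0]); last by apply/setP => j; rewrite !inE.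
by move: card_first_starters; lia.
Qed.
End Greedy.

Lemma rank_no_category n (b : bundle n 0) : rank (enum (bundle n 0)) b = 1.
Proof.
rewrite /rank; congr _.+1; apply/eqP; rewrite -leqn0 -ltnS.
have <- : size (enum (bundle n 0)) = 1 by rewrite -cardT card_ffun !card_ord.
by rewrite index_mem mem_enum.
Qed.

Theorem theorem2 (n p : nat) (O : seq ('I_n * 'I_p)) (opt : 'I_n -> bool) :
  is_linorder O ->
  exists P : 'I_n -> seq (bundle n p),
    (forall j, is_linorder (P j)) /\
    (forall j : 'I_n, exists b : bundle n p,
       (forall l : 'I_p, csam O opt P (j, l) = Some (b l)) /\
       rank (P j) b =
         (if opt j then
            n ^ p + 1 - \prod_(l < p | Kj O j <= l) kk O j (Ocat O j l)
          else
            n ^ p - \sum_(l < p) (kk O j (Ocat O j l) - 1))) /\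
    (exists A : 'I_n -> bundle n p, is_allocation A /\
       n.-1 <= #|[set j : 'I_n | rank (P j) (A j) == 1]| /\
       (forall j : 'I_n, rank (P j) (A j) <= 2)).
Proof.
move=> O_linorder; have [p0|p_gt0] := posnP p.
  subst p; exists (fun _ => enum (bundle n 0)); split=> [j|]; first exact: perm_refl.
  split=> [j|].
    exists [ffun _ => j]; split=> [[]//|].
    by rewrite rank_no_category expn0 !big_ord0; case: (opt j).
  exists (fun j => [ffun _ => j]); split=> [[]//|].
  split=> [|j]; last by rewrite rank_no_category.
  rewrite (_ : [set j | _] = setT) ?cardsT ?card_ord ?leq_pred //.
  by apply/setP => j; rewrite !inE rank_no_category.
exists (profile O_linorder p_gt0 opt); split; first exact: profile_linorder.
split=> [j|].
  by exists (gbundle O j); split; [exact: csam_profile | exact: rank_profile_gbundle].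
exists (shift_alloc O_linorder p_gt0); split; first exact: shift_alloc_is_allocation.
by split; [exact: card_top_ranked | exact: rank_profile_shift_alloc].
Qed.
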